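(* The Giry monad $P$ and the monad $M$ of subprobability measures on $\mathbf{Meas}$ are observational.
   Context: $\mathbf{Meas}$ is the category of measurable spaces with product $\sigma$-algebras as products. $PX$ is the set of probability measures on $X$ with the coarsest $\sigma$-algebra making $p\mapsto p(A)$ measurable for all measurable $A$; $\eta_X(x)=\delta_x$; $\mu_X(\rho)(A)=\int_{PX}p(A)\,\rho(dp)$; $Pf$ is pushforward; the commutative monoidal structure $\nabla:PX\times PY\to P(X\times Y)$ is the product measure. $M$ is analogous with subprobability measures. For a commutative monad $T$ on a cartesian monoidal category: $\mathsf{Kl}(T)$ has morphisms $f:A\rightsquigarrow B$ corresponding to $f^\sharp:A\to TB$, composition $(g\circledcirc f)^\sharp=\mu\circ T(g^\sharp)\circ f^\sharp$, tensor $\otimes$ equal to $\times$ on objects with $(f\otimes g)^\sharp=\nabla\circ(f^\sharp\times g^\sharp)$; $\mathsf{force}_A:TA\rightsquigarrow A$ has $\mathsf{force}_A^\sharp=1_{TA}$; $\mathsf{copy}_n:TX\rightsquigarrow(TX)^{\otimes n}$ has $\mathsf{copy}_n^\sharp=\eta\circ\Delta_n$ ($\Delta_n$ the $n$-fold diagonal); $\mathsf{samp}_n=\mathsf{force}^{\otimes n}\circledcirc\mathsf{copy}_n:TX\rightsquigarrow X^{\otimes n}$. $T$ is observational if for every $X$ the family $(\mathsf{samp}_n)_{n\in\mathbb{N}}$ is jointly monic in $\mathsf{Kl}(T)$. *)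

From HB Require Import structures.
From mathcomp Require Import all_boot all_order all_algebra.
From mathcomp Require Import all_classical all_reals all_analysis.
From mathcomp Require Import giry.
Set Implicit Arguments. Unset Strict Implicit. Unset Printing Implicit Defensive.
Import Order.TTheory GRing.Theory Num.Theory.
Local Open Scope classical_set_scope.
Local Open Scope ereal_scope.

(* Conventions.
   - Measurable spaces: [measurableType d]; X^{(x) n} is [n.-tuple X] with the
     library's product sigma-algebra (generated by the coordinates).
   - P X  = [pprobability X R]: probability measures with the sigma-algebra
     generated by the sets {p | p U < r} (U measurable, r in [0,1]), i.e. the
     coarsest one making every p |-> p U measurable.
   - M X  = [giry X R]: subprobability measures with the sigma-algebra generated
     by the evaluation maps p |-> p U (U measurable).
   - Equality of (sub)probability measures, hence of Kleisli morphisms, is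
     equality on all measurable sets. *)

(* n-fold product measure mu^{(x) n} = nabla_n (mu,...,mu) on n.-tuple X,
   defined by iterated sections:
     mu^{(x)0}   = Dirac at the empty tuple (unit of the monoidal structure),
     mu^{(x)n+1} B = \int mu(dx) mu^{(x)n} {t | x :: t \in B}. *)
Section iprod.
Context {d : measure_display} {X : measurableType d} {R : realType}.
Fixpoint iprod (mu : measure X R) (n : nat) : set (n.-tuple X) -> \bar R :=
  match n return set (n.-tuple X) -> \bar R with
  | 0 => fun B => (\1_B (@nil_tuple X) : R)%:E
  | n'.+1 => fun B => \int[mu]_x @iprod mu n' [set t | B (cons_tuple x t)]
  end.
End iprod.
Arguments iprod {d X R} mu n B.

(* samp_n^# : T X -> T (X^{(x) n}) is  p |-> nabla_n (p,...,p) = p^{(x) n}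
   (indeed samp_n^# = mu o T(nabla_n o (1,...,1)) o eta o Delta_n
                    = nabla_n o Delta_n).
   For a Kleisli morphism f : A ~> T X (f^# : A -> T(T X) measurable),
     (samp_n (o) f)^# a = mu (T(samp_n^#) (f^# a)),
   whose value on a measurable B is  \int_{T X} p^{(x) n}(B) (f^# a)(dp). *)

Definition samp_after_P {R : realType} {dX dA} {X : measurableType dX}
  {A : measurableType dA} (f : A -> pprobability (pprobability X R) R)
  (n : nat) (a : A) (B : set (n.-tuple X)) : \bar R :=
  \int[f a]_p iprod (p : probability X R) n B.

Definition samp_after_M {R : realType} {dX dA} {X : measurableType dX}
  {A : measurableType dA} (f : A -> giry (giry X R) R)
  (n : nat) (a : A) (B : set (n.-tuple X)) : \bar R :=
  \int[f a]_p iprod (p : subprobability X R) n B.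
Arguments samp_after_P {R dX dA X A} f n a B.
Arguments samp_after_M {R dX dA X A} f n a B.

From mathcomp Require Import all_boot all_order all_algebra.
From mathcomp Require Import all_classical all_reals all_analysis.
From mathcomp Require Import giry measurable_realfun ring lra.
Set Implicit Arguments. Unset Strict Implicit. Unset Printing Implicit Defensive.
Import Order.TTheory GRing.Theory Num.Theory.
Import numFieldNormedType.Exports.
Local Open Scope classical_set_scope.
Local Open Scope ring_scope.

(* On a box [U_1 x ... x U_n], the measure [(samp_n o f)^# a] is the mixed moment
   [\int p(U_1) ... p(U_n) d(f a)(p)], so it suffices to show that a finite measure
   on [P X] (or [M X]) is determined by the integrals of the monomials in the
   evaluations [p |-> p(U)].  Suitable sums of Bernstein polynomials are
   polynomials in [p(U)] converging boundedly to the indicator of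
   [{p | p(U) < r}]; by dominated convergence two measures with the same moments
   agree on finite intersections of such sets.  These form a pi-system generating
   the sigma-algebra, so the measures are equal. *)

Section bernstein.
Context {R : realFieldType}.
Implicit Types (m k : nat) (t : R).

Fixpoint bernstein m k t : R :=
  if m is m'.+1 then
    (1 - t) * bernstein m' k t + (if k is k'.+1 then t * bernstein m' k' t else 0)
  else (k == 0)%:R.

Lemma bernstein_ge0 m k t : 0 <= t <= 1 -> 0 <= bernstein m k t.
Proof.
move=> /andP[t0 t1]; elim: m k => [|m IH] [|k] //=; rewrite ?mulr0 ?addr0;
  by rewrite ?addr_ge0 ?mulr_ge0 ?subr_ge0.
Qed.

Lemma bernstein_eq0 m k t : (m < k)%N -> bernstein m k t = 0.
Proof.
elim: m k => [|m IH] [|k] //= ltmk.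
by rewrite !IH ?mulr0 ?addr0 // (ltn_trans _ ltmk).
Qed.

Lemma sum_bernsteinS m t (g : nat -> R) :
  \sum_(k < m.+2) bernstein m.+1 k t * g k =
  (1 - t) * \sum_(k < m.+1) bernstein m k t * g k
  + t * \sum_(k < m.+1) bernstein m k t * g k.+1.
Proof.
under eq_bigr do rewrite /= mulrDl.
rewrite big_split /= !mulr_sumr; congr (_ + _).
  rewrite big_ord_recr /= bernstein_eq0 // mulr0 mul0r addr0.
  by apply: eq_bigr => i _; rewrite mulrA.
by rewrite big_ord_recl /= mul0r add0r; apply: eq_bigr => i _; rewrite mulrA.
Qed.

Lemma sum_bernstein m t : \sum_(k < m.+1) bernstein m k t = 1.
Proof.
elim: m => [|m IH]; first by rewrite big_ord1.
under eq_bigr do rewrite -[bernstein _ _ _]mulr1.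
rewrite (sum_bernsteinS m t (fun=> 1)); under eq_bigr do rewrite mulr1.
by rewrite IH; ring.
Qed.

Lemma sum_bernstein_mean m t : \sum_(k < m.+1) bernstein m k t * k%:R = m%:R * t.
Proof.
elim: m => [|m IH]; first by rewrite big_ord1 mulr0 mul0r.
rewrite (sum_bernsteinS m t (fun k => k%:R)) IH.
under eq_bigr do rewrite -natr1 mulrDr mulr1.
by rewrite big_split /= IH sum_bernstein -natr1; ring.
Qed.

Lemma sum_bernstein_variance m t :
  \sum_(k < m.+1) bernstein m k t * (k%:R - m%:R * t) ^+ 2 = m%:R * t * (1 - t).
Proof.
have second_moment n : \sum_(k < n.+1) bernstein n k t * k%:R ^+ 2 =
    n%:R * t + n%:R * (n%:R - 1) * t ^+ 2.
  elim: n => [|n IH]; first by rewrite big_ord1 /=; ring.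
  rewrite (sum_bernsteinS n t (fun k => k%:R ^+ 2)) IH.
  rewrite (eq_bigr (fun k : 'I_n.+1 => bernstein n k t * k%:R ^+ 2
    + 2 * (bernstein n k t * k%:R) + bernstein n k t)); last first.
    by move=> k _; rewrite -natr1; ring.
  by rewrite !big_split /= -mulr_sumr IH sum_bernstein_mean sum_bernstein -natr1; ring.
rewrite (eq_bigr (fun k : 'I_m.+1 => bernstein m k t * k%:R ^+ 2
  - 2 * m%:R * t * (bernstein m k t * k%:R) + (m%:R * t) ^+ 2 * bernstein m k t));
  last by move=> k _; ring.
rewrite big_split sumrB /= -!mulr_sumr second_moment sum_bernstein_mean.
by rewrite sum_bernstein; ring.
Qed.

Lemma sum_bernstein_deviation_le m t D (P : pred 'I_m.+1) : 0 <= t <= 1 -> 0 < D ->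
  (forall k : 'I_m.+1, P k -> D ^+ 2 <= (k%:R - m%:R * t) ^+ 2) ->
  \sum_(k < m.+1 | P k) bernstein m k t <= m%:R * t * (1 - t) / D ^+ 2.
Proof.
move=> t01 D0 devP; have D2_gt0 : 0 < D ^+ 2 by rewrite exprn_gt0.
rewrite -sum_bernstein_variance mulr_suml [leRHS](bigID P) /= -[leLHS]addr0.
apply: lerD.
  apply: ler_sum => k Pk; rewrite ler_pdivlMr // ler_wpM2l ?bernstein_ge0 //.
  exact: devP.
apply: sumr_ge0 => k _; apply: divr_ge0; last exact: ltW.
by rewrite mulr_ge0 ?bernstein_ge0 ?sqr_ge0.
Qed.

End bernstein.

Section bernstein_step.
Context {R : realType}.
Implicit Types (n : nat) (r t : R).

(* With degree [N = (n+1)^4] and margin [N^(3/4)], the margin is [o(N)] but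
   dominates the standard deviation [sqrt N], so the limit is [t < r] even at
   [t = r]. *)
Definition bernstein_step n r t : R :=
  \sum_(k < (n.+1 ^ 4).+1 | k%:R <= (n.+1 ^ 4)%:R * r - (n.+1 ^ 3)%:R)
    bernstein (n.+1 ^ 4) k t.

Lemma bernstein_step_ge0 n r t : 0 <= t <= 1 -> 0 <= bernstein_step n r t.
Proof. by move=> t01; apply: sumr_ge0 => k _; exact: bernstein_ge0. Qed.

Lemma bernstein_step_le1 n r t : 0 <= t <= 1 -> bernstein_step n r t <= 1.
Proof.
move=> t01; rewrite /bernstein_step -(sum_bernstein (n.+1 ^ 4) t) big_mkcond.
by apply: ler_sum => k _; case: ifP => _ //; exact: bernstein_ge0.
Qed.

Lemma bernstein_step_le_harmonic n r t : 0 <= t <= 1 -> r <= t ->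
  bernstein_step n r t <= harmonic n.
Proof.
move=> t01 rt; rewrite /bernstein_step /=; set M : R := n.+1%:R.
have M0 : 0 < M by [].
have M_ge0 := ltW M0.
have [N4 N3] : (n.+1 ^ 4)%:R = M ^+ 4 /\ (n.+1 ^ 3)%:R = M ^+ 3 by rewrite !natrX.
apply: le_trans (sum_bernstein_deviation_le (D := M ^+ 3)
  (P := fun k : 'I__ => k%:R <= (n.+1 ^ 4)%:R * r - (n.+1 ^ 3)%:R) t01 _ _) _.
- by rewrite exprn_gt0.
- move=> k; rewrite N4 N3 => Pk.
  have : M ^+ 3 <= M ^+ 4 * t - k%:R.
    suff : M ^+ 4 * r <= M ^+ 4 * t by lra.
    by rewrite ler_wpM2l // exprn_ge0.
  have : 0 <= M ^+ 3 by rewrite exprn_ge0.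
  nra.
- rewrite N4 -exprM ler_pdivrMr ?exprn_gt0 //.
  have -> : M^-1 * M ^+ (3 * 2) = M ^+ 4 * M by field; rewrite gt_eqF.
  rewrite -mulrA ler_wpM2l ?exprn_ge0 //.
  have M1 : 1 <= M by rewrite ler1n.
  by move: t01 => /andP[t0 t1]; nra.
Qed.

Lemma bernstein_step_ge n r t : 0 <= t <= 1 -> t < r -> 2 <= n.+1%:R * (r - t) ->
  1 - 4 / (r - t) ^+ 2 * harmonic n <= bernstein_step n r t.
Proof.
move=> t01 tr Mrt; rewrite /bernstein_step /=; set M : R := n.+1%:R.
have M0 : 0 < M by [].
have M_ge0 := ltW M0.
have [N4 N3] : (n.+1 ^ 4)%:R = M ^+ 4 /\ (n.+1 ^ 3)%:R = M ^+ 3 by rewrite !natrX.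
pose P : pred 'I_(n.+1 ^ 4).+1 := fun k => k%:R <= (n.+1 ^ 4)%:R * r - (n.+1 ^ 3)%:R.
have -> : \sum_(k < (n.+1 ^ 4).+1 | P k) bernstein (n.+1 ^ 4) k t =
    1 - \sum_(k < (n.+1 ^ 4).+1 | ~~ P k) bernstein (n.+1 ^ 4) k t.
  by rewrite -(sum_bernstein (n.+1 ^ 4) t) [in RHS](bigID P) addrK.
rewrite lerD2l lerN2.
have D0 : 0 < M ^+ 4 * (r - t) / 2 by rewrite divr_gt0 ?mulr_gt0 ?exprn_gt0 ?subr_gt0.
apply: le_trans (sum_bernstein_deviation_le (P := predC P) t01 D0 _) _.
- move=> k; rewrite /= /P N4 N3 -ltNge => Pk.
  have : M ^+ 3 <= M ^+ 4 * (r - t) / 2.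
    have -> : M ^+ 4 * (r - t) / 2 = M ^+ 3 * (M * (r - t) / 2) by ring.
    by rewrite -{1}[M ^+ 3]mulr1 ler_wpM2l ?exprn_ge0 // ler_pdivlMr; lra.
  nra.
- rewrite N4 ler_pdivrMr ?exprn_gt0 //.
  have -> : 4 / (r - t) ^+ 2 / M * (M ^+ 4 * (r - t) / 2) ^+ 2 = M ^+ 4 * M ^+ 3.
    by field; rewrite lt0r_neq0 //= subr_eq0 gt_eqF.
  rewrite -mulrA ler_wpM2l ?exprn_ge0 //.
  have M3 : 1 <= M ^+ 3 by rewrite exprn_ege1 // ler1n.
  by move: t01 => /andP[t0 t1]; nra.
Qed.

Lemma bernstein_step_cvg r t : 0 <= t <= 1 ->
  bernstein_step n r t @[n --> \oo] --> ((t < r)%R%:R : R).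
Proof.
move=> t01; have [tr|rt] := ltP t r; rewrite /= ?mulr1n ?mulr0n.
- pose c := 4 / (r - t) ^+ 2.
  have lim_lower : 1 - c * harmonic n @[n --> \oo] --> (1 : R).
    rewrite -[X in _ --> X]subr0 -(mulr0 c).
    by apply: cvgB; [exact: cvg_cst | exact: cvgMr cvg_harmonic].
  apply: (squeeze_cvgr _ lim_lower (cvg_cst (1 : R))).
  near=> n; rewrite bernstein_step_le1 // andbT bernstein_step_ge //.
  rewrite -ler_pdivrMr ?subr_gt0 //; near: n.
  by apply: filterS (nbhs_infty_ger (2 / (r - t))) => n /le_trans; apply; rewrite ler_nat.
- apply: (squeeze_cvgr _ (cvg_cst (0 : R)) cvg_harmonic).
  by near=> n; rewrite bernstein_step_ge0 // bernstein_step_le_harmonic.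
Unshelve. all: by end_near.
Qed.

End bernstein_step.

Lemma bounded_integrable d (T : measurableType d) (R : realType)
    (mu : measure T R) (h : T -> R) :
  (mu setT < +oo)%E -> measurable_fun setT h -> (exists M, forall x, `|h x| <= M) ->
  mu.-integrable setT (EFin \o h).
Proof.
move=> mu_fin mh [M hM]; apply: measurable_bounded_integrable => //.
exists M; split; first by rewrite num_real.
by move=> M' MM' x _; apply: le_trans (hM x) (ltW MM').
Qed.

Section moment_determinacy.
Context d (T : measurableType d) (R : realType) (I : Type) (phi : I -> T -> R).
Hypothesis measurable_phi : forall i, measurable_fun setT (phi i).
Hypothesis phi01 : forall i x, 0 <= phi i x <= 1.

Definition monomial (l : seq I) x : R := \prod_(i <- l) phi i x.

Lemma measurable_monomial l : measurable_fun setT (monomial l).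
Proof.
elim: l => [|i l IH]; rewrite /monomial.
  by under eq_fun do rewrite big_nil; exact: measurable_cst.
by under eq_fun do rewrite big_cons; exact: measurable_funM.
Qed.

Lemma monomial01 l x : 0 <= monomial l x <= 1.
Proof.
rewrite /monomial; elim: l => [|i l /andP[m0 m1]]; first by rewrite big_nil ler01 lexx.
have /andP[p0 p1] := phi01 i x.
by rewrite big_cons mulr_ge0 //= mulr_ile1.
Qed.

Definition cylinder (l : seq (I * R)) : set T :=
  [set x | all (fun ir => phi ir.1 x < ir.2) l].

Lemma mem_cylinder l x : (x \in cylinder l) = all (fun ir => phi ir.1 x < ir.2) l.
Proof. by apply/idP/idP => [/set_mem|/mem_set]. Qed.

Lemma cylinder_cat l1 l2 : cylinder (l1 ++ l2) = cylinder l1 `&` cylinder l2.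
Proof. by apply/seteqP; split => x; rewrite /cylinder /= all_cat => /andP. Qed.

Lemma measurable_cylinder l : measurable (cylinder l).
Proof.
elim: l => [|[i r] l IH].
  by rewrite (_ : cylinder [::] = setT) //; apply/seteqP; split.
rewrite (_ : cylinder _ = phi i @^-1` `]-oo, r[ `&` cylinder l).
  by apply: measurableI => //; rewrite -[_ @^-1` _]setTI; exact: measurable_phi.
by apply/seteqP; split => x; rewrite /cylinder /= in_itv /= => /andP.
Qed.

Definition cylinder_approx (l : seq (I * R)) n x : R :=
  \prod_(ir <- l) bernstein_step n ir.2 (phi ir.1 x).

Lemma cylinder_approx01 l n x : 0 <= cylinder_approx l n x <= 1.
Proof.
rewrite /cylinder_approx; elim: l => [|[i r] l /andP[a0 a1]].
  by rewrite big_nil ler01 lexx.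
have s0 := bernstein_step_ge0 n r (phi01 i x).
have s1 := bernstein_step_le1 n r (phi01 i x).
by rewrite big_cons mulr_ge0 //= mulr_ile1.
Qed.

Lemma indic_cylinder l x :
  \1_(cylinder l) x = \prod_(ir <- l) (phi ir.1 x < ir.2)%R%:R :> R.
Proof.
rewrite indicE mem_cylinder; elim: l => [|ir l IH]; first by rewrite big_nil.
by rewrite big_cons /= -IH -natrM mulnb.
Qed.

Lemma cylinder_approx_cvg l x :
  cylinder_approx l n x @[n --> \oo] --> (\1_(cylinder l) x : R).
Proof.
rewrite indic_cylinder; apply: cvg_big => [|ir _]; first exact: mul_continuous.
exact: bernstein_step_cvg.
Qed.

Variables rho1 rho2 : measure T R.
Hypotheses (rho1_fin : (rho1 setT < +oo)%E) (rho2_fin : (rho2 setT < +oo)%E).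
Hypothesis moments_eq : forall l,
  (\int[rho1]_x (monomial l x)%:E = \int[rho2]_x (monomial l x)%:E)%E.

Definition moment_class (f : T -> R) := [/\ measurable_fun setT f,
  exists M, forall x, `|f x| <= M &
  forall l, (\int[rho1]_x (f x * monomial l x)%:E =
             \int[rho2]_x (f x * monomial l x)%:E)%E].

Lemma moment_class_ext f g : f =1 g -> moment_class f -> moment_class g.
Proof. by move=> /funext ->. Qed.

Lemma moment_class_monomial l : moment_class (monomial l).
Proof.
split; first exact: measurable_monomial.
  by exists 1 => x; have /andP[m0 m1] := monomial01 l x; rewrite ger0_norm.
move=> l'; have monomial_cat (rho : measure T R) :
    (\int[rho]_x (monomial l x * monomial l' x)%:E =
     \int[rho]_x (monomial (l ++ l') x)%:E)%E.
  by apply: eq_integral => x _; rewrite /monomial big_cat.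
by rewrite !monomial_cat moments_eq.
Qed.

Lemma moment_class_integrable f l (rho : measure T R) :
  moment_class f -> (rho setT < +oo)%E ->
  rho.-integrable setT (EFin \o (fun x => f x * monomial l x)).
Proof.
move=> [mf [M fM] _] rho_fin; apply: bounded_integrable => //.
  exact: measurable_funM (measurable_monomial l).
exists M => x; have /andP[m0 m1] := monomial01 l x.
by rewrite normrM (ger0_norm m0) -[leRHS]mulr1 ler_pM.
Qed.

Lemma moment_classD f g : moment_class f -> moment_class g -> moment_class (f \+ g).
Proof.
move=> cf cg; have [mf [M fM] If] := cf; have [mg [N gN] Ig] := cg.
split; first exact: measurable_funD.
  by exists (M + N) => x; apply: le_trans (ler_normD _ _) (lerD _ _).
move=> l; have integralD_monomial (rho : measure T R) :
    (rho setT < +oo)%E -> (\int[rho]_x ((f x + g x) * monomial l x)%:E =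
      \int[rho]_x (f x * monomial l x)%:E + \int[rho]_x (g x * monomial l x)%:E)%E.
  move=> rho_fin; under eq_integral do rewrite mulrDl EFinD.
  by apply: integralD => //; exact: moment_class_integrable.
by rewrite /= !integralD_monomial // If Ig.
Qed.

Lemma moment_classZ c f : moment_class f -> moment_class (fun x => c * f x).
Proof.
move=> cf; have [mf [M fM] If] := cf.
split; first exact: measurable_funM.
  by exists (`|c| * M) => x; rewrite normrM ler_wpM2l.
move=> l; have integralZ_monomial (rho : measure T R) :
    (rho setT < +oo)%E -> (\int[rho]_x (c * f x * monomial l x)%:E =
      c%:E * \int[rho]_x (f x * monomial l x)%:E)%E.
  move=> rho_fin; under eq_integral do rewrite -mulrA EFinM.
  by apply: integralZl => //; exact: moment_class_integrable.
by rewrite !integralZ_monomial // If.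
Qed.

Lemma moment_classMphi i f : moment_class f -> moment_class (fun x => phi i x * f x).
Proof.
move=> cf; have [mf [M fM] If] := cf.
split; first exact: measurable_funM.
  exists M => x; have /andP[p0 p1] := phi01 i x.
  by rewrite normrM (ger0_norm p0) -[leRHS]mul1r ler_pM.
move=> l; have shift_monomial (rho : measure T R) :
    (\int[rho]_x (phi i x * f x * monomial l x)%:E =
     \int[rho]_x (f x * monomial (i :: l) x)%:E)%E.
  by apply: eq_integral => x _; rewrite /monomial big_cons mulrCA mulrA.
by rewrite !shift_monomial If.
Qed.

Lemma moment_class_integral_eq f : moment_class f ->
  (\int[rho1]_x (f x)%:E = \int[rho2]_x (f x)%:E)%E.
Proof.
move=> [_ _ /(_ [::])]; rewrite /monomial.
under eq_integral do rewrite big_nil mulr1.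
by under [RHS]eq_integral do rewrite big_nil mulr1.
Qed.

Lemma moment_class_sum (J : Type) (s : seq J) (P : pred J) (F : J -> T -> R) :
  (forall j, moment_class (F j)) -> moment_class (fun x => \sum_(j <- s | P j) F j x).
Proof.
move=> cF; elim: s => [|j s IH].
  apply: (moment_class_ext _ (moment_classZ 0 (moment_class_monomial [::]))).
  by move=> x; rewrite big_nil mul0r.
by rewrite /=; under eq_fun do rewrite big_cons; case: (P j) => //; exact: moment_classD.
Qed.

Lemma moment_class_bernstein m k i f : moment_class f ->
  moment_class (fun x => bernstein m k (phi i x) * f x).
Proof.
elim: m k f => [|m IH] k f cf; first exact: moment_classZ.
have c1f : moment_class (fun x => (1 - phi i x) * f x).
  have := moment_classD cf (moment_classZ (-1) (moment_classMphi i cf)).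
  by apply: moment_class_ext => x /=; ring.
case: k => [|k]; first by apply: (moment_class_ext _ (IH 0%N _ c1f)) => x /=; ring.
have := moment_classD (IH k.+1 _ c1f) (IH k _ (moment_classMphi i cf)).
by apply: moment_class_ext => x /=; ring.
Qed.

Lemma moment_class_cylinder_approx l n : moment_class (cylinder_approx l n).
Proof.
rewrite /cylinder_approx; elim: l => [|[i r] l IH].
  apply: (moment_class_ext _ (moment_class_monomial [::])) => x.
  by rewrite /monomial !big_nil.
under eq_fun do rewrite big_cons /= /bernstein_step mulr_suml.
by apply: moment_class_sum => k; exact: moment_class_bernstein.
Qed.

Lemma cylinder_approx_integral_cvg (rho : measure T R) l :
  (rho setT < +oo)%E ->
  (\int[rho]_x (cylinder_approx l n x)%:E)%E @[n --> \oo] --> rho (cylinder l).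
Proof.
move=> rho_fin.
have mapprox n : measurable_fun setT (fun x => (cylinder_approx l n x)%:E).
  by apply/measurable_EFinP; have [] := moment_class_cylinder_approx l n.
have mindic : measurable_fun setT (fun x => (\1_(cylinder l) x : R)%:E).
  exact/measurable_EFinP/measurable_indic/measurable_cylinder.
have pointwise : {ae rho, forall x, setT x ->
    (cylinder_approx l n x)%:E @[n --> \oo] --> (\1_(cylinder l) x : R)%:E}.
  apply: aeW => x _; apply/fine_cvgP.
  by split; [exact: nearW | exact: cylinder_approx_cvg].
have dominated :
    {ae rho, forall x n, setT x -> (`|(cylinder_approx l n x)%:E| <= 1%:E)%E}.
  apply: aeW => x n _; rewrite abse_EFin lee_fin.
  by have /andP[a0 a1] := cylinder_approx01 l n x; rewrite ger0_norm.
have integrable1 : rho.-integrable setT (fun _ => 1%:E).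
  by apply: (bounded_integrable (h := fun _ => 1)) => //; exists 1 => _; rewrite normr1.
have [_ _] :=
  dominated_convergence measurableT mapprox mindic pointwise integrable1 dominated.
by rewrite integral_indic ?setIT //; exact: measurable_cylinder.
Qed.

Lemma eq_measure_cylinder l : rho1 (cylinder l) = rho2 (cylinder l).
Proof.
apply: (cvg_unique (@ereal_hausdorff R) _
  (cylinder_approx_integral_cvg (l := l) rho2_fin)) => /=.
under eq_cvg => n do
  rewrite -(moment_class_integral_eq (moment_class_cylinder_approx l n)).
exact: cylinder_approx_integral_cvg.
Qed.

Lemma eq_measure_of_moments :
  @measurable _ T = <<s range cylinder >> -> forall A, measurable A -> rho1 A = rho2 A.
Proof.
move=> gen_cylinder; apply: (measure_unique (range cylinder) (fun _ => setT)) => //.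
- by move=> _ _ [l1 _ <-] [l2 _ <-]; exists (l1 ++ l2) => //; rewrite cylinder_cat.
- by move=> _; exists [::] => //; apply/seteqP; split.
- by rewrite bigcup_const.
- by move=> _ [l _ <-]; exact: eq_measure_cylinder.
Qed.

End moment_determinacy.

Section box.
Local Open Scope ereal_scope.
Context d (X : measurableType d) (R : realType).
Implicit Types l : seq {U : set X | measurable U}.

Fixpoint in_box l (s : seq X) : Prop :=
  match l, s with
  | U :: l', x :: s' => sval U x /\ in_box l' s'
  | [::], [::] => True
  | _, _ => False
  end.

Definition box n l : set (n.-tuple X) := [set t | in_box l t].
Arguments box : clear implicits.

Lemma measurable_box n l : size l = n -> measurable (box n l).
Proof.
elim: n l => [|n IH] [|U l] //= => [_|[size_l]].
  by rewrite (_ : box 0 [::] = setT) //; apply/seteqP; split => // -[[|x s] ?].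
rewrite (_ : box n.+1 _ = (fun t : n.+1.-tuple X => tnth t ord0) @^-1` sval U `&`
    (fun t : n.+1.-tuple X => [tuple of behead t]) @^-1` box n l).
  apply: measurableI; rewrite -[_ @^-1` _]setTI.
    exact: measurable_tnth (svalP U).
  exact: measurable_behead (IH l size_l).
by apply/seteqP; split => -[[|x s] ?].
Qed.

Lemma iprod_set0 (mu : measure X R) n : iprod mu n set0 = 0.
Proof.
elim: n => [|n IH] /=; first by rewrite indic0.
by under eq_integral do rewrite (_ : [set t | _] = set0) // IH; rewrite integral0.
Qed.

Lemma iprod_box (mu : measure X R) n l : size l = n ->
  iprod mu n (box n l) = \prod_(U <- l) mu (sval U).
Proof.
elim: n l => [|n IH] [|U l] //= => [_|[size_l]]; first by rewrite indicE mem_set // big_nil.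
transitivity (\int[mu]_x (\prod_(V <- l) mu (sval V) * (\1_(sval U) x)%:E)).
  apply: eq_integral => x _; rewrite indicE.
  have [Ux|nUx] := pselect (sval U x).
    rewrite mem_set // mule1 -IH //; congr iprod.
    by rewrite /box; apply/seteqP; split => t /= => [[]//|]; exact: conj Ux.
  rewrite memNset // mule0 (_ : [set t | _] = set0) ?iprod_set0 //.
  by rewrite /box; apply/seteqP; split => t //= [].
rewrite ge0_integralZl.
- rewrite integral_indic; last exact: svalP.
  + by rewrite setIT big_cons muleC.
  + exact: measurableT.
- exact: measurableT.
- exact/measurable_EFinP/measurable_indic/svalP.
- by move=> x _; rewrite lee_fin.
- exact: prode_ge0.
Qed.

End box.
Arguments box {d X} n l.

Section evaluation_moments.
Local Open Scope ereal_scope.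
Context dX (X : measurableType dX) (R : realType) dT (T : measurableType dT).
Variable ev : T -> measure X R.
Hypothesis ev_setT_le1 : forall p, ev p setT <= 1.
Hypothesis measurable_ev : forall U, measurable U -> measurable_fun setT (fun p => ev p U).
Hypothesis measurable_ev_generated : @measurable _ T `<=`
  <<s \bigcup_(U in measurable) preimage_set_system setT (fun p => ev p U) measurable >>.

Definition mass (U : {U : set X | measurable U}) p : R := fine (ev p (sval U)).

Lemma ev01 p U : measurable U -> 0 <= ev p U <= 1.
Proof.
by move=> mU; rewrite measure_ge0 (le_trans _ (ev_setT_le1 p)) ?le_measure ?inE.
Qed.

Lemma massK U p : (mass U p)%:E = ev p (sval U).
Proof.
have /andP[ev0 ev1] := ev01 p (svalP U).
by rewrite fineK // ge0_fin_numE // (le_lt_trans ev1) ?ltry.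
Qed.

Lemma mass01 U p : (0 <= mass U p <= 1)%R.
Proof. by rewrite -!lee_fin massK ev01 //; exact: svalP. Qed.

Lemma measurable_mass U : measurable_fun setT (mass U).
Proof.
apply/measurable_EFinP.
rewrite (_ : EFin \o mass U = fun p => ev p (sval U)); first exact/measurable_ev/svalP.
by apply/funext => p /=; rewrite massK.
Qed.

Lemma preimage_ev_cylinder U E : measurable U -> measurable E ->
  <<s range (cylinder mass) >> (setT `&` (fun p => ev p U) @^-1` E).
Proof.
move=> mU mE.
pose S := image_set_system setT (fun p => ev p U) <<s range (cylinder mass) >>.
have S_sigma : sigma_algebra setT S by exact/sigma_algebra_image/smallest_sigma_algebra.
have mE' : (@ErealGenInftyO.G R).-sigma.-measurable E.
  by rewrite -ErealGenInftyO.measurableE.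
apply: (smallest_sub S_sigma _ mE').
move=> _ [r ->]; apply: sub_sigma_algebra.
exists [:: (exist _ U mU, r)] => //.
rewrite setTI preimage_itvNyo; apply/seteqP; split => p;
  by rewrite /cylinder /= andbT -lte_fin (massK (exist _ U mU)).
Qed.

Lemma measurable_cylinder_generated : @measurable _ T = <<s range (cylinder mass) >>.
Proof.
apply/seteqP; split.
- apply: subset_trans measurable_ev_generated _.
  apply: smallest_sub; first exact: smallest_sigma_algebra.
  by move=> _ [U mU [E mE <-]]; exact: preimage_ev_cylinder.
- apply: smallest_sub; first exact: sigma_algebra_measurable.
  by move=> _ [l _ <-]; exact: measurable_cylinder measurable_mass l.
Qed.

Lemma monomial_massE l p :
  (monomial mass l p)%:E = iprod (ev p) (size l) (box (size l) l).
Proof.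
rewrite iprod_box // /monomial -prodEFin.
by apply: eq_bigr => U _; rewrite massK.
Qed.

Lemma eq_measure_of_iprod_integrals (rho1 rho2 : measure T R) :
  rho1 setT < +oo -> rho2 setT < +oo ->
  (forall n B, measurable B ->
    \int[rho1]_p iprod (ev p) n B = \int[rho2]_p iprod (ev p) n B) ->
  forall S, measurable S -> rho1 S = rho2 S.
Proof.
move=> rho1_fin rho2_fin iprod_eq.
apply: (eq_measure_of_moments measurable_mass mass01 rho1_fin rho2_fin _
  measurable_cylinder_generated) => l.
under eq_integral do rewrite monomial_massE.
under [RHS]eq_integral do rewrite monomial_massE.
by apply: iprod_eq; exact: measurable_box.
Qed.

End evaluation_moments.

Section pprobability_evaluations.
Local Open Scope ereal_scope.
Context dX (X : measurableType dX) (R : realType).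

Lemma measurable_pprobability_ev U : measurable U ->
  measurable_fun [set: pprobability X R] (fun p : pprobability X R => p U).
Proof.
move=> mU; apply: (measurability _ (ErealGenInftyO.measurableE R)).
move=> _ /= -[_ [r ->] <-]; rewrite setTI preimage_itvNyo -/(mset U r).
have [r0|r0] := leP 0%R r; last by rewrite lt0_mset.
have [r1|r1] := leP r 1%R; last by rewrite gt1_mset.
by apply: sub_sigma_algebra; exists r => /=; [rewrite in_itv/= r0|exists U].
Qed.

Lemma pprobability_ev_generated : @measurable _ (pprobability X R) `<=`
  <<s \bigcup_(U in measurable)
      preimage_set_system setT (fun p : pprobability X R => p U) measurable >>.
Proof.
apply: smallest_sub; first exact: smallest_sigma_algebra.
move=> _ [r _ [U mU <-]]; apply: sub_sigma_algebra; exists U => //.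
exists `]-oo, r%:E[%classic; first exact: emeasurable_itv.
by rewrite setTI preimage_itvNyo.
Qed.

End pprobability_evaluations.

Local Open Scope ereal_scope.

Theorem theorem9p1 (R : realType) :
  (forall (dX : measure_display) (X : measurableType dX)
          (dA : measure_display) (A : measurableType dA)
          (f g : A -> pprobability (pprobability X R) R),
      measurable_fun [set: A] f -> measurable_fun [set: A] g ->
      (forall (n : nat) (a : A) (B : set (n.-tuple X)), measurable B ->
          samp_after_P f n a B = samp_after_P g n a B) ->
      forall (a : A) (S : set (pprobability X R)), measurable S ->
        f a S = g a S)
  /\
  (forall (dX : measure_display) (X : measurableType dX)
          (dA : measure_display) (A : measurableType dA)
          (f g : A -> giry (giry X R) R),
      measurable_fun [set: A] f -> measurable_fun [set: A] g ->
      (forall (n : nat) (a : A) (B : set (n.-tuple X)), measurable B ->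
          samp_after_M f n a B = samp_after_M g n a B) ->
      forall (a : A) (S : set (giry X R)), measurable S ->
        f a S = g a S).
Proof.
split=> dX X dA A f g _ _ samp_eq a.
- apply: (eq_measure_of_iprod_integrals
    (ev := fun p : pprobability X R => p : probability X R)) => //.
  + by move=> p; exact: probability_le1.
  + exact: measurable_pprobability_ev.
  + exact: pprobability_ev_generated.
  + exact: le_lt_trans (probability_le1 _ measurableT) (ltry 1).
  + exact: le_lt_trans (probability_le1 _ measurableT) (ltry 1).
  + by move=> n B; exact: samp_eq.
- apply: (eq_measure_of_iprod_integrals
    (ev := fun p : giry X R => p : subprobability X R)).
  + by move=> p; exact: (@sprobability_setT _ _ _ p).
  + exact: measurable_giry_ev.
  + by []. (* the sigma-algebra of [giry X R] is generated by the evaluations *)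
  + exact: le_lt_trans (@sprobability_setT _ _ _ (f a)) (ltry 1).
  + exact: le_lt_trans (@sprobability_setT _ _ _ (g a)) (ltry 1).
  + by move=> n B; exact: samp_eq.
Qed.
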